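(* Fix $d\ge1$, the feasible set $\mathcal{X}=\mathbb{R}^d$, starting point $x_0=\mathbf{0}$, and $0<\mu\le L$, with quadratic switching cost. The competitive ratio of every online algorithm in the limited information setting is $\Omega\big(\frac{L}{\sqrt{\mu}}\big)$ as $\mu\to0$; that is, there are constants $c>0$ and $\mu_0>0$ such that for all $0<\mu\le\mu_0$, all $L\ge\mu$ and every such online algorithm $\mathcal{A}$, $\mathrm{cr}_{\mathcal{A}}\ge c\,L/\sqrt{\mu}$.
   Context: A problem instance consists of a horizon $T\ge1$ and differentiable functions $f_1,\dots,f_T:\mathbb{R}^d\to[0,\infty)$ with $\frac{\mu}{2}\|y-x\|^2\le f_t(y)-f_t(x)-\langle\nabla f_t(x),y-x\rangle\le\frac{L}{2}\|y-x\|^2$ for all $x,y$. An online algorithm in the limited information setting chooses, at each time $t$, an action $x_t$ using only $x_0$, the known parameters, and gradients of $f_{t-1}$ (and of earlier functions) evaluated at finitely many (adaptively chosen) points; in particular $x_t$ is chosen without any information about $f_t,\dots,f_T$. The algorithm's cost is $C_{\mathcal{A}}=\sum_{t=1}^T\big(f_t(x_t)+\frac12\|x_t-x_{t-1}\|^2\big)$, $C_{\mathsf{OPT}}$ is the minimum of the same expression over all $(x_1,\dots,x_T)$ with the same $x_0$, and $\mathrm{cr}_{\mathcal{A}}=\sup C_{\mathcal{A}}/C_{\mathsf{OPT}}$ over all problem instances (including all horizons $T$). *)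

From HB Require Import structures.
From mathcomp Require Import all_boot all_order all_algebra.
From mathcomp Require Import all_classical all_reals all_analysis.
Set Implicit Arguments. Unset Strict Implicit. Unset Printing Implicit Defensive.
Import Order.TTheory GRing.Theory Num.Theory numFieldNormedType.Exports.
Local Open Scope classical_set_scope.
Local Open Scope ring_scope.

Section SOCO.
Variables (R : realType) (d : nat).
Notation vec := 'rV[R]_d.

Definition dotv (u v : vec) : R := \sum_(i < d) u 0 i * v 0 i.
Definition sqnorm (u : vec) : R := dotv u u.

Definition grad (f : vec -> R) (x : vec) : vec :=
  \row_(i < d) derive f x (delta_mx 0 i).

Definition admissible (mu L : R) (T : nat) (f : nat -> vec -> R) : Prop :=
  forall t, (1 <= t <= T)%N ->
    (forall x, 0 <= f t x) /\
    (forall x, differentiable (f t) x) /\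
    (forall x y,
      mu / 2 * sqnorm (y - x) <= f t y - f t x - dotv (grad (f t) x) (y - x)
      <= L / 2 * sqnorm (y - x)).

(* A query program: finitely many adaptive gradient queries, then an output.
   QAsk s p k queries the gradient of f_s at the point p and continues with k. *)
Inductive qprog : Type :=
| QRet of vec
| QAsk of nat & vec & (vec -> qprog).

Fixpoint run (G : nat -> vec -> vec) (p : qprog) : vec :=
  match p with
  | QRet x => x
  | QAsk s q k => run G (k (G s q))
  end.

(* A deterministic online algorithm (with x_0 = 0 and the parameters d, mu, L
   fixed before it is chosen): at each time t >= 1 a query program. *)
Definition algorithm := nat -> qprog.

(* Oracle available at time t: gradients of f_s for 1 <= s <= t-1 only;
   queries about f_t, f_{t+1}, ... (or f_0) return no information. *)
Definition oracle (f : nat -> vec -> R) (t : nat) : nat -> vec -> vec :=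
  fun s q => if (0 < s < t)%N then grad (f s) q else 0.

Definition alg_action (A : algorithm) (f : nat -> vec -> R) (t : nat) : vec :=
  if t is 0 then 0 else run (oracle f t) (A t).

Definition cost (T : nat) (f : nat -> vec -> R) (xs : nat -> vec) : R :=
  \sum_(1 <= t < T.+1) (f t (xs t) + 2^-1 * sqnorm (xs t - xs t.-1)).

Definition opt_cost (T : nat) (f : nat -> vec -> R) : R :=
  inf [set cost T f xs | xs in [set xs : nat -> vec | xs 0%N = 0]].

(* the ratio C_A / C_OPT in \bar R, with c/0 = +oo for c > 0 and 0/0 = 0 *)
Definition ratio (CA CO : R) : \bar R :=
  if 0 < CO then (CA / CO)%:E else if 0 < CA then +oo%E else 0%E.

Definition cr (mu L : R) (A : algorithm) : \bar R :=
  ereal_sup [set r | exists (T : nat) (f : nat -> vec -> R),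
    (1 <= T)%N /\ admissible mu L T f /\
    r = ratio (cost T f (alg_action A f)) (opt_cost T f)].

End SOCO.

From Pilot Require Import Defs.
From HB Require Import structures.
From mathcomp Require Import all_boot all_order all_algebra.
From mathcomp Require Import all_classical all_reals all_analysis.
From mathcomp Require Import ring lra.
Set Implicit Arguments. Unset Strict Implicit.
Import Order.TTheory GRing.Theory Num.Theory numFieldNormedType.Exports.
Local Open Scope ring_scope.
Local Open Scope classical_set_scope.

(* Feed the algorithm f_t = mu/2 |x|^2.  If it ever leaves the origin, ending
   the instance right then gives OPT = 0 < ALG.  Otherwise it is still at the
   origin at time k ~ 1/sqrt mu even if f_k is replaced by L/2 |x - e|^2 with
   |e| = 1, because it learns about f_k only after acting at time k; so it pays
   L/2, while walking from 0 to e in k equal steps costs at most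
   mu k/2 + 1/(2k) <= 3/2 sqrt mu. *)

Section SqNorm.
Variables (R : realType) (d : nat).
Notation vec := 'rV[R]_d.

Lemma sqnorm_ge0 (u : vec) : 0 <= sqnorm u.
Proof. by apply: sumr_ge0 => i _; rewrite -expr2 sqr_ge0. Qed.

Lemma sqnorm0 : sqnorm (0 : vec) = 0.
Proof. by rewrite /sqnorm /dotv big1 // => i _; rewrite mxE mul0r. Qed.

Lemma sqnormZ (r : R) (u : vec) : sqnorm (r *: u) = r ^+ 2 * sqnorm u.
Proof. by rewrite /sqnorm /dotv mulr_sumr; apply: eq_bigr => i _; rewrite !mxE; ring. Qed.

Lemma sqnormN (u : vec) : sqnorm (- u) = sqnorm u.
Proof. by rewrite -scaleN1r sqnormZ sqrrN expr1n mul1r. Qed.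

Lemma sqnorm_gt0 (u : vec) : u != 0 -> 0 < sqnorm u.
Proof.
move=> u_neq0; rewrite lt_def sqnorm_ge0 andbT; apply: contra u_neq0.
rewrite psumr_eq0 => [/allP u0|i _]; last by rewrite -expr2 sqr_ge0.
apply/eqP/rowP => j; have /implyP/(_ isT) := u0 j (mem_index_enum j).
by rewrite mxE mulf_eq0 orbb => /eqP.
Qed.

Lemma dotv_delta (u : vec) (i : 'I_d) : dotv u (delta_mx 0 i) = u 0 i.
Proof.
rewrite /dotv (bigD1 i) //= big1 => [|j /negbTE ji].
  by rewrite !mxE !eqxx mulr1 addr0.
by rewrite !mxE ji andbF mulr0.
Qed.

Lemma sqnorm_delta (i : 'I_d) : sqnorm (delta_mx 0 i : vec) = 1.
Proof. by rewrite /sqnorm dotv_delta mxE !eqxx. Qed.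

End SqNorm.

Section Quadratic.
Variables (R : realType) (d : nat).
Notation vec := 'rV[R]_d.

Definition quad (a : R) (y x : vec) : R := a * sqnorm (x - y).

Lemma quad_ge0 a y x : 0 <= a -> 0 <= quad a y x.
Proof. by move=> a_ge0; rewrite mulr_ge0 ?sqnorm_ge0. Qed.

Lemma quad_at_center a y : quad a y y = 0.
Proof. by rewrite /quad subrr sqnorm0 mulr0. Qed.

Global Instance is_derive_coord_shift (y x v : vec) (i : 'I_d) :
  is_derive x v (fun z : vec => z 0 i - y 0 i) (v 0 i).
Proof.
have quot : (fun h : R => h^-1 *: (((fun z : vec => z 0 i - y 0 i) \o shift x)
    (h *: v) - (x 0 i - y 0 i))) @ 0^' --> v 0 i.
  apply: cvg_near_cst; near=> h.
  have h_neq0 : h != 0 by near: h; exact: nbhs_dnbhs_neq.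
  rewrite /= !mxE -[X in X = _]/(h^-1 * _).
  by rewrite opprB addrA subrK addrK mulrA mulVf // mul1r.
apply: DeriveDef; first by apply/cvg_ex; exists (v 0 i).
exact: cvg_lim quot.
Unshelve. all: by end_near.
Qed.

Lemma quad_sum_coord a y : quad a y =
  cst a * \sum_(i < d) ((fun z : vec => z 0 i - y 0 i) * (fun z => z 0 i - y 0 i)).
Proof.
apply/funext => z; rewrite /quad /sqnorm /dotv /= fct_sumE; congr (_ * _).
by apply: eq_bigr => i _; rewrite !mxE.
Qed.

Lemma is_derive_quad a y x v : is_derive x v (quad a y) (2 * a * dotv (x - y) v).
Proof.
rewrite quad_sum_coord; apply: is_derive_eq.
rewrite scaler0 addr0 /dotv scaler_sumr mulr_sumr; apply: eq_bigr => i _.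
by rewrite /GRing.scale /= !mxE; ring.
Qed.

Lemma grad_quad a y x : grad (quad a y) x = (2 * a) *: (x - y).
Proof.
apply/rowP => i; rewrite !mxE.
by have [_ ->] := is_derive_quad a y x (delta_mx 0 i); rewrite dotv_delta !mxE.
Qed.

Lemma differentiable_quad a y x : differentiable (quad a y) x.
Proof.
rewrite quad_sum_coord; apply: differentiableM; first exact: differentiable_cst.
apply: differentiable_sum => i.
have coord_diff : differentiable (fun z : vec => z 0 i - y 0 i) x.
  by apply: differentiableB; [exact: differentiable_coord|exact: differentiable_cst].
exact: differentiableM.
Qed.

Lemma quad_bregman a y x z :
  quad a y z - quad a y x - dotv (grad (quad a y) x) (z - x) = a * sqnorm (z - x).
Proof.
rewrite grad_quad /quad /sqnorm /dotv !mulr_sumr -!sumrB.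
by apply: eq_bigr => i _; rewrite !mxE; ring.
Qed.

Lemma admissible_quad mu L T (f : nat -> vec -> R) : 0 <= mu ->
  (forall t, (1 <= t <= T)%N ->
     exists2 a, mu / 2 <= a <= L / 2 & exists y, f t = quad a y) ->
  admissible mu L T f.
Proof.
move=> mu_ge0 f_quad t /f_quad [a /andP[mu_le_a a_le_L] [y ->]].
have a_ge0 : 0 <= a by apply: le_trans mu_le_a; rewrite divr_ge0.
split; [|split]; first by move=> x; exact: quad_ge0.
  exact: differentiable_quad.
by move=> x z; rewrite quad_bregman !ler_wpM2r ?sqnorm_ge0.
Qed.

End Quadratic.

Section Online.
Variables (R : realType) (d : nat).
Notation vec := 'rV[R]_d.
Implicit Types (f g : nat -> vec -> R) (xs ys : nat -> vec).

Lemma alg_action_local (A : algorithm R d) f g t :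
  (forall s, (0 < s < t)%N -> f s = g s) -> alg_action A f t = alg_action A g t.
Proof.
case: t => [//|t] fg; rewrite /alg_action /oracle.
have -> // : (fun s q => if (0 < s < t.+1)%N then grad (f s) q else 0) =
             (fun s q => if (0 < s < t.+1)%N then grad (g s) q else 0).
by apply/funext => s; apply/funext => q; case: ifP => // /fg ->.
Qed.

Lemma eq_cost T f xs ys :
  (forall t, (t <= T)%N -> xs t = ys t) -> cost T f xs = cost T f ys.
Proof.
move=> xy; apply: eq_big_nat => t /andP[t_gt0 t_le]; rewrite !xy //.
by rewrite (leq_trans (leq_pred t)).
Qed.

Lemma cost_zero_path T f : cost T f (fun=> 0) = \sum_(1 <= t < T.+1) f t 0.
Proof. by apply: eq_bigr => t _; rewrite subrr sqnorm0 mulr0 addr0. Qed.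

Lemma cost_ge0 T f xs : (forall t x, 0 <= f t x) -> 0 <= cost T f xs.
Proof.
move=> f_ge0; apply: sumr_ge0 => t _.
by rewrite addr_ge0 ?mulr_ge0 ?invr_ge0 ?sqnorm_ge0.
Qed.

Lemma cost_ge_last T f xs :
  (forall t x, 0 <= f t x) -> (0 < T)%N -> f T (xs T) <= cost T f xs.
Proof.
move=> f_ge0; case: T => // T _; rewrite /cost big_nat_recr //= -[leLHS]add0r.
by rewrite lerD ?lerDl ?mulr_ge0 ?invr_ge0 ?sqnorm_ge0 // (cost_ge0 T xs).
Qed.

Lemma opt_cost_le_cost T f xs :
  (forall t x, 0 <= f t x) -> xs 0%N = 0 -> opt_cost T f <= cost T f xs.
Proof.
move=> f_ge0 xs0; apply: ge_inf; last by exists xs.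
by exists 0 => _ [ys _ <-]; exact: cost_ge0.
Qed.

Lemma ratio_pinfty (CA CO : R) : 0 < CA -> CO <= 0 -> Defs.ratio CA CO = +oo%E.
Proof. by move=> CA_gt0 CO_le0; rewrite /Defs.ratio ltNge CO_le0 CA_gt0. Qed.

Lemma ratio_ge (CA CO B : R) :
  0 < CA -> CO <= B -> 0 < B -> ((CA / B)%:E <= Defs.ratio CA CO)%E.
Proof.
move=> CA_gt0 CO_le_B B_gt0; rewrite /Defs.ratio; case: ifPn => CO_gt0.
  by rewrite lee_fin ler_pM2l // lef_pV2 ?posrE.
by rewrite CA_gt0 leey.
Qed.

Lemma cr_ge_ratio mu L (A : algorithm R d) T f :
  (1 <= T)%N -> admissible mu L T f ->
  (Defs.ratio (cost T f (alg_action A f)) (opt_cost T f) <= cr mu L A)%E.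
Proof. by move=> T_ge1 f_adm; apply: ereal_sup_ubound; exists T, f. Qed.

End Online.

Section Adversary.
Variables (R : realType) (d : nat) (mu L : R).
Hypotheses (mu_gt0 : 0 < mu) (mu_le_L : mu <= L).
Notation vec := 'rV[R]_d.

Definition quiet : nat -> vec -> R := fun=> quad (mu / 2) 0.

Definition spike (k : nat) (e : vec) : nat -> vec -> R :=
  fun t => if t == k then quad (L / 2) e else quiet t.

Definition ramp (k : nat) (e : vec) : nat -> vec := fun t => (t%:R / k%:R) *: e.

Let mu2_ge0 : 0 <= mu / 2. Proof. by rewrite divr_ge0 // ltW. Qed.
Let L2_ge0 : 0 <= L / 2. Proof. by rewrite divr_ge0 // ltW // (lt_le_trans mu_gt0). Qed.

Lemma quiet_ge0 t x : 0 <= quiet t x.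
Proof. exact: quad_ge0. Qed.

Lemma spike_ge0 k e t x : 0 <= spike k e t x.
Proof. by rewrite /spike; case: ifP => _; [exact: quad_ge0|exact: quiet_ge0]. Qed.

Lemma quiet_admissible T : admissible mu L T quiet.
Proof.
apply: admissible_quad (ltW mu_gt0) _ => t _; exists (mu / 2); last by exists 0.
by rewrite !ler_pM2r // mu_le_L lexx.
Qed.

Lemma spike_admissible T k e : admissible mu L T (spike k e).
Proof.
apply: admissible_quad (ltW mu_gt0) _ => t _; rewrite /spike.
case: ifP => _; [exists (L / 2); last by exists e|exists (mu / 2); last by exists 0];
  by rewrite !ler_pM2r // mu_le_L lexx.
Qed.

Lemma cr_quiet_move (A : algorithm R d) t :
  (1 <= t)%N -> alg_action A quiet t != 0 -> cr mu L A = +oo%E.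
Proof.
move=> t_ge1 moved; apply/eqP; rewrite -leye_eq.
apply: le_trans _ (cr_ge_ratio A t_ge1 (quiet_admissible (T := t))); rewrite ratio_pinfty //.
  apply: lt_le_trans _ (cost_ge_last _ quiet_ge0 t_ge1).
  by rewrite mulr_gt0 ?divr_gt0 // subr0 sqnorm_gt0.
apply: le_trans (opt_cost_le_cost t (xs := fun=> 0) quiet_ge0 erefl) _.
by rewrite cost_zero_path big1 // => s _; exact: quad_at_center.
Qed.

Lemma cost_ramp_spike k e : (0 < k)%N ->
  cost k (spike k e) (ramp k e) <= (mu / 2 + (k%:R ^+ 2)^-1 / 2) * sqnorm e *+ k.
Proof.
move=> k_gt0; have k_neq0 : k%:R != 0 :> R by rewrite pnatr_eq0 -lt0n.
rewrite -[k in _ *+ k]subn0 -subSS -sumr_const_nat.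
apply: ler_sum_nat => t /andP[t_ge1 t_le_k]; rewrite mulrDl; apply: lerD.
  rewrite /spike; case: eqP => [->|_].
    by rewrite /ramp divff // scale1r quad_at_center mulr_ge0 ?sqnorm_ge0.
  rewrite /quiet /quad subr0 sqnormZ mulrA ler_wpM2r ?sqnorm_ge0 //.
  rewrite ler_piMr // exprn_ile1 ?divr_ge0 //.
  by rewrite ler_pdivrMr ?mul1r ?ler_nat ?ltr0n.
case: t t_ge1 {t_le_k} => // t _ /=.
have -> : ramp k e t.+1 - ramp k e t = k%:R^-1 *: e.
  by rewrite /ramp -scalerBl -mulrBl mulrS addrK mul1r.
by rewrite sqnormZ exprVn mulrA [2^-1 * _]mulrC.
Qed.

Section IdleAlgorithm.
Variable A : algorithm R d.
Hypothesis A_idle : forall t, alg_action A quiet t = 0.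

Lemma alg_action_spike k e t : (t <= k)%N -> alg_action A (spike k e) t = 0.
Proof.
move=> t_le_k; rewrite -(A_idle t); apply: alg_action_local => s /andP[_ s_lt_t].
by rewrite /spike ltn_eqF // (leq_trans s_lt_t).
Qed.

Lemma cost_alg_spike k e :
  (0 < k)%N -> cost k (spike k e) (alg_action A (spike k e)) = L / 2 * sqnorm e.
Proof.
move=> k_gt0; rewrite (eq_cost _ (ys := fun=> 0)); last exact: alg_action_spike.
rewrite cost_zero_path big_nat_recr //= big_nat_cond big1 => [|t /andP[/andP[_ t_lt_k] _]].
  by rewrite add0r /spike eqxx /quad sub0r sqnormN.
by rewrite /spike ltn_eqF //; exact: quad_at_center.
Qed.

Lemma cr_spike_ge k (e : vec) B : (0 < k)%N -> sqnorm e = 1 ->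
  (mu / 2 + (k%:R ^+ 2)^-1 / 2) * k%:R <= B -> ((L / 2 / B)%:E <= cr mu L A)%E.
Proof.
move=> k_gt0 e1 ramp_le_B.
apply: le_trans _ (cr_ge_ratio A k_gt0 (spike_admissible (T := k) k e)).
have B_gt0 : 0 < B.
  apply: lt_le_trans ramp_le_B.
  by rewrite mulr_gt0 ?ltr0n // ltr_pwDl ?divr_gt0 ?invr_gt0 ?exprn_gt0 ?ltr0n.
rewrite cost_alg_spike // e1 mulr1; apply: ratio_ge => //.
  by rewrite divr_gt0 // (lt_le_trans mu_gt0).
have ramp0 : ramp k e 0 = 0 by rewrite /ramp mul0r scale0r.
apply: le_trans (opt_cost_le_cost k (spike_ge0 k e) ramp0) _.
by apply: le_trans (cost_ramp_spike e k_gt0) _; rewrite e1 mulr1 -mulr_natr.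
Qed.

End IdleAlgorithm.
End Adversary.

Lemma ramp_cost_bound (R : realFieldType) (s K : R) :
  0 < s <= 1 -> s^-1 < K <= s^-1 + 1 -> (s ^+ 2 / 2 + (K ^+ 2)^-1 / 2) * K <= 3 / 2 * s.
Proof.
move=> /andP[s_gt0 s_le1] /andP[K_gt K_le].
have K_gt0 : 0 < K by apply: lt_trans K_gt; rewrite invr_gt0.
have K_inv_lt : K^-1 < s by rewrite -[s]invrK ltf_pV2 ?posrE ?invr_gt0.
have s2K_le : s ^+ 2 * K <= s + s ^+ 2.
  have -> : s + s ^+ 2 = s ^+ 2 * (s^-1 + 1) by field; rewrite gt_eqF.
  exact: (ler_wpM2l (sqr_ge0 s) K_le).
have -> : (s ^+ 2 / 2 + (K ^+ 2)^-1 / 2) * K = s ^+ 2 * K / 2 + K^-1 / 2.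
  by field; rewrite gt_eqF.
have : s ^+ 2 <= s by rewrite expr2 ler_piMr // ltW.
lra.
Qed.

Theorem lemma10 (R : realType) (d : nat) : (1 <= d)%N ->
  exists c : R, 0 < c /\ exists mu0 : R, 0 < mu0 /\
    forall mu L : R, 0 < mu -> mu <= mu0 -> mu <= L ->
      forall A : algorithm R d,
        ((c * L / Num.sqrt mu)%:E <= cr mu L A)%E.
Proof.
move=> d_ge1; exists 3^-1; split; first by rewrite invr_gt0.
exists 1; split=> // mu L mu_gt0 mu_le1 mu_le_L A.
have [[t [t_ge1 moved]]|never_moves] :=
  pselect (exists t, (1 <= t)%N /\ alg_action A (quiet mu) t != 0).
  by rewrite (cr_quiet_move mu_gt0 mu_le_L t_ge1 moved) leey.
have A_idle t : alg_action A (quiet mu) t = 0.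
  case: t => [//|t]; apply/eqP; apply: contra_notT never_moves => moved.
  by exists t.+1.
set s := Num.sqrt mu; set k := (Num.truncn s^-1).+1.
have s_gt0 : 0 < s by rewrite sqrtr_gt0.
have s2 : s ^+ 2 = mu by rewrite sqr_sqrtr // ltW.
have s_le1 : s <= 1 by rewrite -sqrtr1 ler_sqrt.
have k_near : s^-1 < k%:R <= s^-1 + 1.
  have s_inv_ge0 : 0 <= s^-1 by rewrite invr_ge0 ltW.
  have /andP[k_le k_gt] := truncn_itv s_inv_ge0.
  by rewrite k_gt /= mulrSr lerD2r.
have ramp_le : (mu / 2 + (k%:R ^+ 2)^-1 / 2) * k%:R <= 3 / 2 * s.
  by rewrite -s2 ramp_cost_bound ?s_gt0 ?s_le1.
have -> : 3^-1 * L / s = L / 2 / (3 / 2 * s) by field; rewrite gt_eqF.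
exact: (cr_spike_ge mu_gt0 mu_le_L A_idle (ltn0Sn _) (sqnorm_delta R (Ordinal d_ge1)) ramp_le).
Qed.
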